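(* Let $\lambda>0$ and let $\mathbf r_\lambda(t)$, $t\ge0$, be the uniformly rotating planar trajectory generated by a minimizer of $f+\lambda g$ (see context), regarded as a motion in $\mathbb R^3$ lying in the plane $z=0$, with velocities $\mathbf v(t)=\dot{\mathbf r}_\lambda(t)$. Let $\mathbf L=\mathbf L(\mathbf r_\lambda(t),\mathbf v(t))$ and $T=T(\mathbf v(t))$ (both constant in $t$), and assume $\mathbf L\ne0$, $T>0$. Then for every $t\ge0$ the state $(\mathbf r_\lambda(t),\mathbf v(t))$ minimizes $g(\mathbf r)$ over all $(\mathbf r,\mathbf v)\in\Omega$ with $\mathbf L(\mathbf r,\mathbf v)=\mathbf L$ and $T(\mathbf v)=T$.
   Context: Fix $N\ge2$, masses $m_i>0$, $\gamma>0$. Planar configuration space $\mathfrak R=\{\mathbf r\in(\mathbb R^2)^N:\ \mathbf r_i\neq\mathbf r_j \text{ for } i\neq j\}$; $f(\mathbf r)=\sum_{i<j}\frac{\gamma m_im_j}{|\mathbf r_j-\mathbf r_i|}$, $g(\mathbf r)=\sum_i m_i|\mathbf r_i|^2$. For a minimizer $\mathbf r_\lambda=(\mathbf r_{1\lambda},\dots,\mathbf r_{N\lambda})$ of $f+\lambda g$ on $\mathfrak R$, with $\mathbf r_{i\lambda}=|\mathbf r_{i\lambda}|(\cos\varphi_{i\lambda},\sin\varphi_{i\lambda})$ and $\omega=\sqrt{2\lambda}$, set $\mathbf r_{i\lambda}(t)=|\mathbf r_{i\lambda}|(\cos(\varphi_{i\lambda}+\omega t),\sin(\varphi_{i\lambda}+\omega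 t))$. Three-dimensional phase space $\Omega=\mathfrak R_3\times(\mathbb R^3)^N$, $\mathfrak R_3=\{\mathbf r\in(\mathbb R^3)^N:\mathbf r_i\ne\mathbf r_j,\ i\ne j\}$; $\mathbf L(\mathbf r,\mathbf v)=\sum_im_i\mathbf r_i\times\mathbf v_i$, $T(\mathbf v)=\frac12\sum_im_i|\mathbf v_i|^2$, $g(\mathbf r)=\sum_im_i|\mathbf r_i|^2$. *)

From Stdlib Require Import Reals List.
From Coquelicot Require Import Coquelicot.
Open Scope R_scope.

Definition sumN (N : nat) (F : nat -> R) : R :=
  fold_right Rplus 0 (map F (seq 0 N)).

Definition norm2 (p : R * R) : R := sqrt (fst p ^ 2 + snd p ^ 2).

Definition in_config2 (N : nat) (r : nat -> R * R) : Prop :=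
  forall i j, (i < N)%nat -> (j < N)%nat -> i <> j -> r i <> r j.

Definition f_pot (N : nat) (m : nat -> R) (gamma : R) (r : nat -> R * R) : R :=
  sumN N (fun i => sumN N (fun j =>
    if Nat.ltb i j then
      gamma * m i * m j /
        norm2 (fst (r j) - fst (r i), snd (r j) - snd (r i))
    else 0)).

Definition g2 (N : nat) (m : nat -> R) (r : nat -> R * R) : R :=
  sumN N (fun i => m i * (norm2 (r i)) ^ 2).

Definition is_minimizer (N : nat) (m : nat -> R) (gamma lambda : R)
    (r : nat -> R * R) : Prop :=
  in_config2 N r /\
  forall r', in_config2 N r' ->
    f_pot N m gamma r + lambda * g2 N m r <= f_pot N m gamma r' + lambda * g2 N m r'.

Record V3 := mkV3 { vx : R; vy : R; vz : R }.

Definition cross (a b : V3) : V3 :=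
  mkV3 (vy a * vz b - vz a * vy b)
       (vz a * vx b - vx a * vz b)
       (vx a * vy b - vy a * vx b).

Definition sqnorm3 (a : V3) : R := vx a ^ 2 + vy a ^ 2 + vz a ^ 2.

Definition V3zero : V3 := mkV3 0 0 0.

(* configuration space \mathfrak R_3; Omega = \mathfrak R_3 x (R^3)^N *)
Definition in_config3 (N : nat) (r : nat -> V3) : Prop :=
  forall i j, (i < N)%nat -> (j < N)%nat -> i <> j -> r i <> r j.

Definition angmom (N : nat) (m : nat -> R) (r v : nat -> V3) : V3 :=
  mkV3 (sumN N (fun i => m i * vx (cross (r i) (v i))))
       (sumN N (fun i => m i * vy (cross (r i) (v i))))
       (sumN N (fun i => m i * vz (cross (r i) (v i)))).

Definition kin (N : nat) (m : nat -> R) (v : nat -> V3) : R :=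
  / 2 * sumN N (fun i => m i * sqnorm3 (v i)).

Definition g3 (N : nat) (m : nat -> R) (r : nat -> V3) : R :=
  sumN N (fun i => m i * sqnorm3 (r i)).

(* r0 : the minimizer, phi : its polar angles, omega = sqrt (2 lambda) *)
Definition rot_traj (lambda : R) (r0 : nat -> R * R) (phi : nat -> R)
    (t : R) : nat -> V3 :=
  fun i => mkV3 (norm2 (r0 i) * cos (phi i + sqrt (2 * lambda) * t))
                (norm2 (r0 i) * sin (phi i + sqrt (2 * lambda) * t))
                0.

Definition traj_vel (x : R -> nat -> V3) (t : R) : nat -> V3 :=
  fun i => mkV3 (Derive (fun s => vx (x s i)) t)
                (Derive (fun s => vy (x s i)) t)
                (Derive (fun s => vz (x s i)) t).

(* The rotating trajectory has angular velocity w = sqrt (2 lambda), so with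
   G = g(r_lambda) its angular momentum is (0, 0, w G) and its kinetic energy is
   w^2 G / 2 = lambda G, while g stays equal to G.  For an arbitrary state,
   AM-GM per particle gives (r x v)_z <= w/2 |r|^2 + |v|^2 / (2 w), hence
   L_z <= w/2 g(r) + T / w; prescribing L_z = w G and T = w^2 G / 2 leaves
   G <= g(r).  Minimality of r_lambda is only used for its collision-freeness. *)
From Stdlib Require Import Reals List Lra Lia.
From Coquelicot Require Import Coquelicot.
Open Scope R_scope.

Lemma sumN_ext (N : nat) (F G : nat -> R) :
  (forall i, (i < N)%nat -> F i = G i) -> sumN N F = sumN N G.
Proof.
  intros H; unfold sumN.
  assert (Hl : forall i, In i (seq 0 N) -> F i = G i)
    by (intros i Hi; apply in_seq in Hi; apply H; lia).
  induction (seq 0 N) as [|k l IH]; simpl; [reflexivity|].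
  rewrite (Hl k (or_introl eq_refl)), IH; auto with datatypes.
Qed.

Lemma sumN_le (N : nat) (F G : nat -> R) :
  (forall i, (i < N)%nat -> F i <= G i) -> sumN N F <= sumN N G.
Proof.
  intros H; unfold sumN.
  assert (Hl : forall i, In i (seq 0 N) -> F i <= G i)
    by (intros i Hi; apply in_seq in Hi; apply H; lia).
  induction (seq 0 N) as [|k l IH]; simpl; [lra|].
  apply Rplus_le_compat; auto with datatypes.
Qed.

Lemma sumN_plus (N : nat) (F G : nat -> R) :
  sumN N (fun i => F i + G i) = sumN N F + sumN N G.
Proof. unfold sumN; induction (seq 0 N); simpl; [ring|]. rewrite IHl; ring. Qed.

Lemma sumN_scal (N : nat) (c : R) (F : nat -> R) :
  sumN N (fun i => c * F i) = c * sumN N F.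
Proof. unfold sumN; induction (seq 0 N); simpl; [ring|]. rewrite IHl; ring. Qed.

Lemma sumN_const0 (N : nat) : sumN N (fun _ => 0) = 0.
Proof. unfold sumN; induction (seq 0 N); simpl; [reflexivity|]. rewrite IHl; ring. Qed.

Lemma cross_z_le_AM_GM (w : R) (a b : V3) : 0 < w ->
  vz (cross a b) <= w / 2 * sqnorm3 a + / (2 * w) * sqnorm3 b.
Proof.
  intros hw; destruct a as [a1 a2 a3], b as [b1 b2 b3]; unfold cross, sqnorm3; simpl.
  assert (Hsq : w / 2 * (a1 ^ 2 + a2 ^ 2 + a3 ^ 2) + / (2 * w) * (b1 ^ 2 + b2 ^ 2 + b3 ^ 2)
                - (a1 * b2 - a2 * b1)
              = / (2 * w) * ((w * a1 - b2) ^ 2 + (w * a2 + b1) ^ 2 + (w * a3) ^ 2 + b3 ^ 2))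
    by (field; lra).
  assert (0 <= / (2 * w) * ((w * a1 - b2) ^ 2 + (w * a2 + b1) ^ 2 + (w * a3) ^ 2 + b3 ^ 2)).
  { apply Rmult_le_pos; [left; apply Rinv_0_lt_compat; lra|].
    pose proof (pow2_ge_0 (w * a1 - b2)); pose proof (pow2_ge_0 (w * a2 + b1));
    pose proof (pow2_ge_0 (w * a3)); pose proof (pow2_ge_0 b3); lra. }
  lra.
Qed.

Lemma angmom_z_le_AM_GM (N : nat) (m : nat -> R) (w : R) (r v : nat -> V3) :
  (forall i, (i < N)%nat -> 0 <= m i) -> 0 < w ->
  vz (angmom N m r v) <= w / 2 * g3 N m r + / w * kin N m v.
Proof.
  intros hm hw; unfold angmom, g3, kin; simpl.
  replace (/ w * (/ 2 * sumN N (fun i => m i * sqnorm3 (v i))))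
    with (/ (2 * w) * sumN N (fun i => m i * sqnorm3 (v i))) by (field; lra).
  rewrite <- !sumN_scal, <- sumN_plus.
  apply sumN_le; intros i Hi.
  pose proof (cross_z_le_AM_GM w (r i) (v i) hw).
  replace (w / 2 * (m i * sqnorm3 (r i)) + / (2 * w) * (m i * sqnorm3 (v i)))
    with (m i * (w / 2 * sqnorm3 (r i) + / (2 * w) * sqnorm3 (v i))) by ring.
  apply Rmult_le_compat_l; auto.
Qed.

Lemma g3_ge_of_angmom_kin (N : nat) (m : nat -> R) (w G : R) (r v : nat -> V3) :
  (forall i, (i < N)%nat -> 0 <= m i) -> 0 < w ->
  vz (angmom N m r v) = w * G -> kin N m v = w ^ 2 / 2 * G -> G <= g3 N m r.
Proof.
  intros hm hw HL HT.
  pose proof (angmom_z_le_AM_GM N m w r v hm hw) as H.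
  rewrite HL, HT in H.
  replace (/ w * (w ^ 2 / 2 * G)) with (w / 2 * G) in H by (field; lra).
  apply (Rmult_le_reg_l (w / 2)); lra.
Qed.

Lemma sqnorm3_polar (rho theta : R) :
  sqnorm3 (mkV3 (rho * cos theta) (rho * sin theta) 0) = rho ^ 2.
Proof.
  unfold sqnorm3; simpl; pose proof (sin2_cos2 theta) as K; unfold Rsqr in K.
  transitivity (rho ^ 2 * (sin theta * sin theta + cos theta * cos theta)); [ring|].
  rewrite K; ring.
Qed.

Lemma sqnorm3_polar_perp (rho theta : R) :
  sqnorm3 (mkV3 (- rho * sin theta) (rho * cos theta) 0) = rho ^ 2.
Proof.
  unfold sqnorm3; simpl; pose proof (sin2_cos2 theta) as K; unfold Rsqr in K.
  transitivity (rho ^ 2 * (sin theta * sin theta + cos theta * cos theta)); [ring|].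
  rewrite K; ring.
Qed.

Lemma cross_polar_perp (rho w theta : R) :
  cross (mkV3 (rho * cos theta) (rho * sin theta) 0)
        (mkV3 (- (rho * w) * sin theta) (rho * w * cos theta) 0)
  = mkV3 0 0 (w * rho ^ 2).
Proof.
  unfold cross; simpl; pose proof (sin2_cos2 theta) as K; unfold Rsqr in K.
  f_equal; try ring.
  transitivity (w * rho ^ 2 * (sin theta * sin theta + cos theta * cos theta)); [ring|].
  rewrite K; ring.
Qed.

Lemma polar_rotate_inj (rho1 rho2 theta1 theta2 alpha : R) :
  rho1 * cos (theta1 + alpha) = rho2 * cos (theta2 + alpha) ->
  rho1 * sin (theta1 + alpha) = rho2 * sin (theta2 + alpha) ->
  (rho1 * cos theta1, rho1 * sin theta1) = (rho2 * cos theta2, rho2 * sin theta2).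
Proof.
  intros Hc Hs.
  replace theta1 with (theta1 + alpha - alpha) by ring.
  replace theta2 with (theta2 + alpha - alpha) by ring.
  rewrite !cos_minus, !sin_minus; f_equal.
  - transitivity (rho1 * cos (theta1 + alpha) * cos alpha
                  + rho1 * sin (theta1 + alpha) * sin alpha); [ring|].
    rewrite Hc, Hs; ring.
  - transitivity (rho1 * sin (theta1 + alpha) * cos alpha
                  - rho1 * cos (theta1 + alpha) * sin alpha); [ring|].
    rewrite Hc, Hs; ring.
Qed.

Section RotatingTrajectory.

Variables (N : nat) (m : nat -> R) (lambda : R) (r0 : nat -> R * R) (phi : nat -> R).

Let w := sqrt (2 * lambda).

Lemma traj_vel_rot_traj (t : R) (i : nat) :
  traj_vel (rot_traj lambda r0 phi) t i =
  mkV3 (- (norm2 (r0 i) * w) * sin (phi i + w * t))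
       (norm2 (r0 i) * w * cos (phi i + w * t)) 0.
Proof.
  unfold traj_vel, rot_traj; simpl; f_equal.
  - apply is_derive_unique; auto_derive; auto; unfold w; ring.
  - apply is_derive_unique; auto_derive; auto; unfold w; ring.
  - apply Derive_const.
Qed.

Lemma g3_rot_traj (t : R) : g3 N m (rot_traj lambda r0 phi t) = g2 N m r0.
Proof.
  apply sumN_ext; intros i _; unfold rot_traj; rewrite sqnorm3_polar; reflexivity.
Qed.

Lemma angmom_rot_traj (t : R) :
  angmom N m (rot_traj lambda r0 phi t) (traj_vel (rot_traj lambda r0 phi) t)
  = mkV3 0 0 (w * g2 N m r0).
Proof.
  assert (Hcross : forall i, cross (rot_traj lambda r0 phi t i)
                                   (traj_vel (rot_traj lambda r0 phi) t i)
                             = mkV3 0 0 (w * norm2 (r0 i) ^ 2))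
    by (intros i; rewrite traj_vel_rot_traj; apply cross_polar_perp).
  unfold angmom, g2; rewrite <- sumN_scal; f_equal;
    [rewrite <- (sumN_const0 N) | rewrite <- (sumN_const0 N) |];
    apply sumN_ext; intros i _; rewrite Hcross; simpl; ring.
Qed.

Lemma kin_rot_traj (t : R) :
  0 <= lambda -> kin N m (traj_vel (rot_traj lambda r0 phi) t) = w ^ 2 / 2 * g2 N m r0.
Proof.
  intros hl; unfold kin, g2.
  replace (w ^ 2 / 2 * sumN N (fun i => m i * norm2 (r0 i) ^ 2))
    with (/ 2 * sumN N (fun i => w ^ 2 * (m i * norm2 (r0 i) ^ 2)))
    by (rewrite sumN_scal; field).
  f_equal; apply sumN_ext; intros i _.
  rewrite traj_vel_rot_traj, sqnorm3_polar_perp; ring.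
Qed.

Lemma in_config3_rot_traj (t : R) :
  in_config2 N r0 ->
  (forall i, (i < N)%nat ->
     r0 i = (norm2 (r0 i) * cos (phi i), norm2 (r0 i) * sin (phi i))) ->
  in_config3 N (rot_traj lambda r0 phi t).
Proof.
  intros Hc hphi i j Hi Hj Hij Heq.
  apply (Hc i j Hi Hj Hij); rewrite (hphi i Hi), (hphi j Hj).
  unfold rot_traj in Heq; injection Heq as Hx Hy.
  exact (polar_rotate_inj _ _ _ _ _ Hx Hy).
Qed.

End RotatingTrajectory.

Theorem theorem10p2
  (N : nat) (hN : (2 <= N)%nat)
  (m : nat -> R) (hm : forall i, (i < N)%nat -> 0 < m i)
  (gamma : R) (hgamma : 0 < gamma)
  (lambda : R) (hlambda : 0 < lambda)
  (r0 : nat -> R * R) (hmin : is_minimizer N m gamma lambda r0)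
  (phi : nat -> R)
  (hphi : forall i, (i < N)%nat ->
     r0 i = (norm2 (r0 i) * cos (phi i), norm2 (r0 i) * sin (phi i))) :
  let x := rot_traj lambda r0 phi in
  let L := angmom N m (x 0) (traj_vel x 0) in
  let T := kin N m (traj_vel x 0) in
  L <> V3zero -> 0 < T ->
  forall t, 0 <= t ->
    in_config3 N (x t) /\
    angmom N m (x t) (traj_vel x t) = L /\
    kin N m (traj_vel x t) = T /\
    (forall r v : nat -> V3, in_config3 N r ->
       angmom N m r v = L -> kin N m v = T ->
       g3 N m (x t) <= g3 N m r).
Proof.
  intros x L T _ _ t _.
  assert (hw : 0 < sqrt (2 * lambda)) by (apply sqrt_lt_R0; lra).
  unfold L, T, x; rewrite !angmom_rot_traj, !kin_rot_traj by lra.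
  split; [|split; [|split]]; try reflexivity.
  - exact (in_config3_rot_traj N lambda r0 phi t (proj1 hmin) hphi).
  - intros r v _ HL HT; rewrite g3_rot_traj.
    apply (g3_ge_of_angmom_kin N m (sqrt (2 * lambda)) _ r v); auto.
    + intros i Hi; left; auto.
    + rewrite HL; reflexivity.
Qed.
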